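(* Let $n\geq 1$. The map $\rho_1\mapsto x_1$, $\rho_2\mapsto x_nx_1$, $\rho_3\mapsto x_{n-1}x_nx_1$, $\dots$, $\rho_n\mapsto x_2x_3\cdots x_nx_1$ (i.e. $\rho_k\mapsto x_{n-k+2}x_{n-k+3}\cdots x_nx_1$) extends to a group isomorphism from the group $\langle\rho_1,\dots,\rho_n\mid\rho_1\rho_n\rho_i=\rho_{i+1}\rho_n,\ 1\leq i\leq n-1\rangle$ onto the group $$\langle x_1,\dots,x_n\mid x_1x_2\cdots x_nx_1=x_2x_3\cdots x_nx_1x_2=\cdots=x_nx_1x_2\cdots x_n\rangle$$ (where each word in the chain of equalities is the product of $n+1$ consecutive generators taken cyclically, starting at $x_1$, $x_2$, ..., $x_n$ respectively), with inverse given by $x_1\mapsto\rho_1$, $x_n\mapsto\rho_2\rho_1^{-1}$, $x_{n-1}\mapsto\rho_3\rho_2^{-1}$, $\dots$, $x_2\mapsto\rho_n\rho_{n-1}^{-1}$. *)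

(* Finitely presented groups, encoded as words in the free group
   modulo the congruence generated by free cancellation and the relations. *)
From Stdlib Require Import List Arith Lia.
Import ListNotations.

(* A letter (i, false) is the generator g_i, (i, true) is its inverse g_i^-1. *)
Definition letter := (nat * bool)%type.
Definition word := list letter.

Definition inv_letter (a : letter) : letter := (fst a, negb (snd a)).
Definition inv_word (w : word) : word := rev (map inv_letter w).

(* A relation (l, r) means l = r in the presented group. *)
Definition relations := list (word * word).

Inductive geq (R : relations) : word -> word -> Prop :=
| geq_refl : forall w, geq R w w
| geq_sym : forall u v, geq R u v -> geq R v u
| geq_trans : forall u v w, geq R u v -> geq R v w -> geq R u w
| geq_free : forall u v a, geq R (u ++ a :: inv_letter a :: v) (u ++ v)
| geq_rel : forall u v l r, In (l, r) R -> geq R (u ++ l ++ v) (u ++ r ++ v).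

Definition valid (n : nat) (w : word) : Prop :=
  Forall (fun a : letter => 1 <= fst a <= n) w.

Definition subst (f : nat -> word) (w : word) : word :=
  flat_map (fun a : letter => if snd a then inv_word (f (fst a)) else f (fst a)) w.

Definition gen (i : nat) : letter := (i, false).
Definition gen_inv (i : nat) : letter := (i, true).

Definition rho_rels (n : nat) : relations :=
  map (fun i => ([gen 1; gen n; gen i], [gen (i + 1); gen n])) (seq 1 (n - 1)).

(* The word x_j x_{j+1} ... x_n x_1 ... x_j : n+1 consecutive generators taken
   cyclically, starting at x_j (1 <= j <= n). *)
Definition cyc_word (n j : nat) : word :=
  map (fun k => gen (((j - 1 + k) mod n) + 1)) (seq 0 (n + 1)).

(* Relations of < x_1..x_n | x_1...x_n x_1 = x_2...x_n x_1 x_2 = ... = x_n x_1...x_n >,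
   the chain of equalities expressed as W_1 = W_j for 2 <= j <= n. *)
Definition x_rels (n : nat) : relations :=
  map (fun j => (cyc_word n 1, cyc_word n j)) (seq 2 (n - 1)).

Definition phi_gen (n k : nat) : word :=
  map gen (seq (n - k + 2) (k - 1)) ++ [gen 1].

Definition psi_gen (n j : nat) : word :=
  if j =? 1 then [gen 1] else [gen (n - j + 2); gen_inv (n - j + 1)].

(* The specific computations then rest on two observations:
   - psi telescopes on runs of consecutive generators,
       psi(x_a x_{a+1} ... x_{a+m-1}) = rho_{n+2-a} rho_{n+2-a-m}^-1;
   - phi of both sides of the i-th rho-relation is W_1 phi(rho_i),
     resp. W_{n-i+1} phi(rho_i), so it follows from the x-relation W_1 = W_{n-i+1}.
   Conversely psi(W_1) = rho_1 rho_n and psi(W_{n+1-i}) = rho_{i+1} rho_n rho_i^-1,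
   equal by the i-th rho-relation.  Checking phi o psi and psi o phi on
   generators is again a telescoping computation. *)

From Stdlib Require Import List Arith Lia Setoid Morphisms.
Import ListNotations.

Lemma inv_word_app u v : inv_word (u ++ v) = inv_word v ++ inv_word u.
Proof. unfold inv_word. now rewrite map_app, rev_app_distr. Qed.

Lemma inv_word_involutive w : inv_word (inv_word w) = w.
Proof.
  unfold inv_word. rewrite map_rev, rev_involutive, map_map.
  rewrite <- map_id. apply map_ext. intros [i b]. unfold inv_letter.
  simpl. now rewrite Bool.negb_involutive.
Qed.

Section PresentedGroup.

Variable R : relations.

#[local] Instance geq_equivalence : Equivalence (geq R).
Proof.
  split.
  - exact (geq_refl R).
  - exact (geq_sym R).
  - exact (geq_trans R).
Qed.

Lemma geq_app_l u v w : geq R u v -> geq R (w ++ u) (w ++ v).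
Proof.
  induction 1.
  - reflexivity.
  - now symmetry.
  - etransitivity; eassumption.
  - rewrite !(app_assoc w u). apply geq_free.
  - rewrite !(app_assoc w u). now apply geq_rel.
Qed.

Lemma geq_app_r u v w : geq R u v -> geq R (u ++ w) (v ++ w).
Proof.
  induction 1.
  - reflexivity.
  - now symmetry.
  - etransitivity; eassumption.
  - rewrite <- !app_assoc. apply geq_free.
  - rewrite <- !app_assoc. now apply geq_rel.
Qed.

#[local] Instance app_geq_proper : Proper (geq R ==> geq R ==> geq R) (@app letter).
Proof.
  intros u u' Hu v v' Hv. transitivity (u' ++ v).
  - now apply geq_app_r.
  - now apply geq_app_l.
Qed.

#[local] Instance cons_geq_proper : Proper (eq ==> geq R ==> geq R) (@cons letter).
Proof. intros a b <- u v H. exact (geq_app_l u v [a] H). Qed.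

Lemma geq_mul_inv_r w : geq R (w ++ inv_word w) [].
Proof.
  induction w as [|a w IH]; [reflexivity|].
  change (inv_word (a :: w)) with (inv_word w ++ [inv_letter a]).
  rewrite <- app_comm_cons, app_assoc, IH.
  exact (geq_free R [] [] a).
Qed.

Lemma geq_mul_inv_l w : geq R (inv_word w ++ w) [].
Proof.
  rewrite <- (inv_word_involutive w) at 2. apply geq_mul_inv_r.
Qed.

Lemma geq_inv u v : geq R u v -> geq R (inv_word u) (inv_word v).
Proof.
  intros H.
  transitivity (inv_word u ++ v ++ inv_word v).
  - now rewrite geq_mul_inv_r, app_nil_r.
  - rewrite <- H at 1. now rewrite app_assoc, geq_mul_inv_l.
Qed.

Lemma geq_solve_r u v w : geq R (u ++ w) v -> geq R u (v ++ inv_word w).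
Proof.
  intros H. rewrite <- H, <- app_assoc, geq_mul_inv_r. now rewrite app_nil_r.
Qed.

End PresentedGroup.

#[local] Existing Instance geq_equivalence.
#[local] Existing Instance app_geq_proper.
#[local] Existing Instance cons_geq_proper.

Section Substitution.

Variable f : nat -> word.

Lemma subst_app u v : subst f (u ++ v) = subst f u ++ subst f v.
Proof. apply flat_map_app. Qed.

Lemma subst_gen i : subst f [gen i] = f i.
Proof. apply app_nil_r. Qed.

Lemma subst_inv w : subst f (inv_word w) = inv_word (subst f w).
Proof.
  induction w as [|[i b] w IH]; [reflexivity|].
  change (inv_word ((i, b) :: w)) with (inv_word w ++ [inv_letter (i, b)]).
  change (subst f ((i, b) :: w)) with ((if b then inv_word (f i) else f i) ++ subst f w).
  rewrite subst_app, IH, inv_word_app. f_equal.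
  destruct b; cbn; rewrite app_nil_r; [rewrite inv_word_involutive|]; reflexivity.
Qed.

Lemma subst_respects_geq R R' :
  (forall l r, In (l, r) R -> geq R' (subst f l) (subst f r)) ->
  forall u v, geq R u v -> geq R' (subst f u) (subst f v).
Proof.
  intros HR u v H. induction H.
  - reflexivity.
  - now symmetry.
  - etransitivity; eassumption.
  - change (a :: inv_letter a :: v) with ([a; inv_letter a] ++ v).
    rewrite !subst_app.
    assert (Hcancel : geq R' (subst f [a; inv_letter a]) []).
    { destruct a as [i [|]]; cbn; rewrite app_nil_r.
      - apply geq_mul_inv_l.
      - apply geq_mul_inv_r. }
    now rewrite Hcancel.
  - rewrite !subst_app. now rewrite (HR l r H).
Qed.

End Substitution.

Lemma subst_left_inverse R f g n :
  (forall i, 1 <= i <= n -> geq R (subst g (f i)) [gen i]) ->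
  forall w, valid n w -> geq R (subst g (subst f w)) w.
Proof.
  intros Hgen w Hw. induction Hw as [|[i b] w Hi _ IH]; [reflexivity|].
  change ((i, b) :: w) with ([(i, b)] ++ w).
  rewrite !subst_app, IH. apply geq_app_r.
  destruct b.
  - change [(i, true)] with (inv_word [gen i]).
    rewrite subst_inv, subst_gen, subst_inv. exact (geq_inv R _ _ (Hgen i Hi)).
  - change [(i, false)] with [gen i]. rewrite subst_gen. exact (Hgen i Hi).
Qed.

Definition run (a m : nat) : word := map gen (seq a m).

Lemma run_split a m1 m2 : run a (m1 + m2) = run a m1 ++ run (a + m1) m2.
Proof. unfold run. now rewrite seq_app, map_app. Qed.

Lemma run_cons a m : run a (S m) = gen a :: run (S a) m.
Proof. reflexivity. Qed.

Lemma map_seq_shift {A} (f g : nat -> A) len : forall s t,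
  (forall k, k < len -> f (s + k) = g (t + k)) -> map f (seq s len) = map g (seq t len).
Proof.
  induction len as [|len IH]; intros s t H; [reflexivity|].
  cbn. f_equal.
  - rewrite <- (Nat.add_0_r s), <- (Nat.add_0_r t). apply H. lia.
  - apply IH. intros k Hk. rewrite !Nat.add_succ_l, <- !Nat.add_succ_r. apply H. lia.
Qed.

Lemma cyc_word_runs n j : 1 <= j <= n -> cyc_word n j = run j (n - j + 1) ++ run 1 j.
Proof.
  intros Hj. unfold cyc_word, run.
  replace (n + 1) with ((n - j + 1) + j) by lia.
  rewrite seq_app, map_app. f_equal; apply map_seq_shift; intros k Hk; f_equal.
  - rewrite Nat.mod_small by lia. lia.
  - replace (j - 1 + (0 + (n - j + 1) + k)) with (k + 1 * n) by lia.
    rewrite Nat.Div0.mod_add, Nat.mod_small by lia. lia.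
Qed.

Lemma cyc_word_first n : 1 <= n -> cyc_word n 1 = gen 1 :: run 2 (n - 1) ++ [gen 1].
Proof.
  intros hn. rewrite cyc_word_runs by lia.
  replace (n - 1 + 1) with (S (n - 1)) by lia. reflexivity.
Qed.

Lemma phi_gen_succ n k : 1 <= k < n -> phi_gen n (k + 1) = gen (n - k + 1) :: phi_gen n k.
Proof.
  intros Hk. unfold phi_gen.
  replace (k + 1 - 1) with (S (k - 1)) by lia.
  replace (n - (k + 1) + 2) with (n - k + 1) by lia.
  replace (n - k + 2) with (S (n - k + 1)) by lia. reflexivity.
Qed.

(* psi telescopes on runs: psi(x_a ... x_{a+m-1}) = rho_{n+2-a} rho_{n+2-a-m}^-1,
   valid in any presented group since it only uses free cancellation. *)
Lemma psi_run R n a m : 2 <= a -> a + m <= n + 1 ->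
  geq R (subst (psi_gen n) (run a m)) [gen (n + 2 - a); gen_inv (n + 2 - a - m)].
Proof.
  revert a. induction m as [|m IH]; intros a Ha Ham.
  - rewrite Nat.sub_0_r. symmetry. exact (geq_free R [] [] (gen (n + 2 - a))).
  - rewrite run_cons.
    change (subst (psi_gen n) (gen a :: run (S a) m))
      with (psi_gen n a ++ subst (psi_gen n) (run (S a) m)).
    rewrite IH by lia.
    assert (Hpsi : psi_gen n a = [gen (n + 2 - a); gen_inv (n + 2 - S a)]).
    { unfold psi_gen. destruct (Nat.eqb_spec a 1); [lia|].
      f_equal; [|f_equal]; unfold gen, gen_inv; f_equal; lia. }
    rewrite Hpsi. replace (n + 2 - a - S m) with (n + 2 - S a - m) by lia.
    exact (geq_free R [gen (n + 2 - a)] [gen_inv (n + 2 - S a - m)]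
             (gen_inv (n + 2 - S a))).
Qed.

Lemma phi_rho_rel_lhs n i : 1 <= n ->
  subst (phi_gen n) [gen 1; gen n; gen i] = cyc_word n 1 ++ phi_gen n i.
Proof.
  intros hn. rewrite cyc_word_first by exact hn.
  change (subst (phi_gen n) [gen 1; gen n; gen i])
    with (phi_gen n 1 ++ phi_gen n n ++ phi_gen n i ++ []).
  rewrite app_nil_r. unfold phi_gen at 1 2.
  replace (n - n + 2) with 2 by lia. cbn. now rewrite <- !app_assoc.
Qed.

Lemma phi_rho_rel_rhs n i : 1 <= i <= n - 1 ->
  subst (phi_gen n) [gen (i + 1); gen n] = cyc_word n (n - i + 1) ++ phi_gen n i.
Proof.
  intros Hi. rewrite cyc_word_runs by lia.
  change (subst (phi_gen n) [gen (i + 1); gen n])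
    with (phi_gen n (i + 1) ++ phi_gen n n ++ []).
  rewrite app_nil_r. unfold phi_gen.
  replace (n - (i + 1) + 2) with (n - i + 1) by lia.
  replace (i + 1 - 1) with i by lia.
  replace (n - (n - i + 1) + 1) with i by lia.
  replace (n - n + 2) with 2 by lia.
  fold (run (n - i + 1) i) (run 2 (n - 1)) (run (n - i + 2) (i - 1)).
  rewrite <- !app_assoc. f_equal.
  (* x_1 (x_2 ... x_n) = (x_1 ... x_{n-i+1}) (x_{n-i+2} ... x_n) *)
  rewrite (app_assoc (run 1 _)), app_assoc. f_equal.
  replace (n - i + 2) with (1 + (n - i + 1)) by lia.
  rewrite <- run_split. replace (n - i + 1 + (i - 1)) with (S (n - 1)) by lia.
  reflexivity.
Qed.

(* phi maps each rho-relation to a consequence of W_1 = W_{n-i+1}. *)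
Lemma phi_respects_rels n : 1 <= n -> forall l r, In (l, r) (rho_rels n) ->
  geq (x_rels n) (subst (phi_gen n) l) (subst (phi_gen n) r).
Proof.
  intros hn l r H. unfold rho_rels in H. apply in_map_iff in H.
  destruct H as [i [Heq Hin]]. apply in_seq in Hin. injection Heq as <- <-.
  assert (Hrel : In (cyc_word n 1, cyc_word n (n - i + 1)) (x_rels n)).
  { apply in_map_iff. exists (n - i + 1). split; [reflexivity|]. apply in_seq. lia. }
  rewrite phi_rho_rel_lhs, phi_rho_rel_rhs by lia.
  exact (geq_rel _ [] (phi_gen n i) _ _ Hrel).
Qed.

Lemma psi_cyc_word_first n : 1 <= n ->
  geq (rho_rels n) (subst (psi_gen n) (cyc_word n 1)) [gen 1; gen n].
Proof.
  intros hn. rewrite cyc_word_first by exact hn.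
  change (gen 1 :: run 2 (n - 1) ++ [gen 1]) with ([gen 1] ++ run 2 (n - 1) ++ [gen 1]).
  rewrite !subst_app, (psi_run _ n 2 (n - 1)) by lia.
  replace (n + 2 - 2) with n by lia. replace (n - (n - 1)) with 1 by lia.
  exact (geq_free _ [gen 1; gen n] [] (gen_inv 1)).
Qed.

Lemma psi_cyc_word n j : 2 <= j <= n ->
  geq (rho_rels n) (subst (psi_gen n) (cyc_word n j))
    [gen (n + 2 - j); gen n; gen_inv (n + 1 - j)].
Proof.
  intros Hj. rewrite cyc_word_runs by lia.
  assert (Hrun : run 1 j = [gen 1] ++ run 2 (j - 1)).
  { replace j with (S (j - 1)) at 1 by lia. reflexivity. }
  rewrite Hrun, !subst_app, (psi_run _ n j (n - j + 1)), (psi_run _ n 2 (j - 1)) by lia.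
  replace (n + 2 - j - (n - j + 1)) with 1 by lia.
  replace (n + 2 - 2) with n by lia.
  replace (n - (j - 1)) with (n + 1 - j) by lia.
  exact (geq_free _ [gen (n + 2 - j)] [gen n; gen_inv (n + 1 - j)] (gen_inv 1)).
Qed.

Lemma rho_rel_solved n i : 1 <= i <= n - 1 ->
  geq (rho_rels n) [gen 1; gen n] [gen (i + 1); gen n; gen_inv i].
Proof.
  intros Hi.
  assert (Hrel : In ([gen 1; gen n; gen i], [gen (i + 1); gen n]) (rho_rels n)).
  { apply in_map_iff. exists i. split; [reflexivity|]. apply in_seq. lia. }
  change [gen (i + 1); gen n; gen_inv i] with ([gen (i + 1); gen n] ++ inv_word [gen i]).
  apply geq_solve_r. exact (geq_rel _ [] [] _ _ Hrel).
Qed.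

Lemma psi_respects_rels n : 1 <= n -> forall l r, In (l, r) (x_rels n) ->
  geq (rho_rels n) (subst (psi_gen n) l) (subst (psi_gen n) r).
Proof.
  intros hn l r H. unfold x_rels in H. apply in_map_iff in H.
  destruct H as [j [Heq Hin]]. apply in_seq in Hin. injection Heq as <- <-.
  rewrite psi_cyc_word_first, psi_cyc_word by lia.
  replace (n + 2 - j) with ((n + 1 - j) + 1) by lia.
  apply rho_rel_solved. lia.
Qed.

Lemma psi_phi_gen n k : 1 <= k <= n ->
  geq (rho_rels n) (subst (psi_gen n) (phi_gen n k)) [gen k].
Proof.
  intros Hk. unfold phi_gen. fold (run (n - k + 2) (k - 1)).
  rewrite subst_app, (psi_run _ n (n - k + 2) (k - 1)) by lia.
  replace (n + 2 - (n - k + 2)) with k by lia.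
  replace (k - (k - 1)) with 1 by lia.
  exact (geq_free _ [gen k] [] (gen_inv 1)).
Qed.

(* phi(psi(x_j)) = x_j: for j >= 2 it is x_j phi(rho_{n-j+1}) phi(rho_{n-j+1})^-1. *)
Lemma phi_psi_gen n j : 1 <= j <= n ->
  geq (x_rels n) (subst (phi_gen n) (psi_gen n j)) [gen j].
Proof.
  intros Hj. unfold psi_gen. destruct (Nat.eqb_spec j 1) as [->|Hj1]; [reflexivity|].
  change (subst (phi_gen n) [gen (n - j + 2); gen_inv (n - j + 1)])
    with (phi_gen n (n - j + 2) ++ inv_word (phi_gen n (n - j + 1)) ++ []).
  replace (n - j + 2) with ((n - j + 1) + 1) by lia.
  rewrite phi_gen_succ by lia.
  replace (n - (n - j + 1) + 1) with j by lia.
  rewrite app_nil_r, <- app_comm_cons, geq_mul_inv_r. reflexivity.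
Qed.

Theorem proposition4p18 (n : nat) (hn : 1 <= n) :
  (forall u v, valid n u -> valid n v -> geq (rho_rels n) u v ->
     geq (x_rels n) (subst (phi_gen n) u) (subst (phi_gen n) v)) /\
  (forall u v, valid n u -> valid n v -> geq (x_rels n) u v ->
     geq (rho_rels n) (subst (psi_gen n) u) (subst (psi_gen n) v)) /\
  (forall w, valid n w -> geq (rho_rels n) (subst (psi_gen n) (subst (phi_gen n) w)) w) /\
  (forall w, valid n w -> geq (x_rels n) (subst (phi_gen n) (subst (psi_gen n) w)) w).
Proof.
  split; [|split; [|split]].
  - intros u v _ _. apply subst_respects_geq, phi_respects_rels, hn.
  - intros u v _ _. apply subst_respects_geq, psi_respects_rels, hn.
  - apply subst_left_inverse. intros k Hk. now apply psi_phi_gen.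
  - apply subst_left_inverse. intros j Hj. now apply phi_psi_gen.
Qed.
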